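(* Let $w$ be a non-empty finite LSP word. Then there exists a letter $a$ occurring in $w$ such that $wa$ is LSP.
   Context: A finite word $u$ is a left special factor of a word $w$ if there are distinct letters $x\neq y$ such that $xu$ and $yu$ are factors of $w$. A word is LSP if every left special factor of it is a prefix of it. *)

From mathcomp Require Import all_boot.
Set Implicit Arguments. Unset Strict Implicit. Unset Printing Implicit Defensive.

Definition factor {A : eqType} (u w : seq A) : Prop := infix u w.

Definition left_special {A : eqType} (u w : seq A) : Prop :=
  exists x y : A, x <> y /\ factor (x :: u) w /\ factor (y :: u) w.

Definition LSP {A : eqType} (w : seq A) : Prop :=
  forall u : seq A, left_special u w -> prefix u w.

From mathcomp Require Import all_boot.
Set Implicit Arguments.
Unset Strict Implicit.
Unset Printing Implicit Defensive.

(* Let b be the longest proper border of w (proper suffix that is also a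
   prefix) and a the letter following the prefix occurrence of b.  A factor
   of wa that is left special because of two occurrences inside w is a prefix
   of w.  Otherwise one occurrence xu is a suffix of wa, so u = va with xv a
   suffix of w, and v is left special in w, hence a border of w.  If v were
   shorter than b, xv would be a suffix of b, and xva a factor of w through
   the prefix ba; so v = b and u = ba is a prefix of w. *)

Section Words.

Variable A : eqType.
Implicit Types (a x y : A) (b s t u v w : seq A).

Lemma prefix_le_size s t w :
  prefix s w -> prefix t w -> size s <= size t -> prefix s t.
Proof.
move=> + /prefixP[t' def_w] le_st.
by rewrite def_w !prefixE takel_cat.
Qed.

Lemma suffix_le_size s t w :
  suffix s w -> suffix t w -> size s <= size t -> suffix s t.
Proof.
by rewrite -!prefix_rev -(size_rev s) -(size_rev t); apply: prefix_le_size.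
Qed.

Lemma suffix_size_inj s t w :
  suffix s w -> suffix t w -> size s = size t -> s = t.
Proof.
by rewrite !suffixE => /eqP def_s /eqP def_t eq_st; rewrite -{1}def_s eq_st.
Qed.

Lemma prefix_rcons_nth c b w :
  prefix b w -> size b < size w -> prefix (rcons b (nth c w (size b))) w.
Proof.
rewrite prefixE => /eqP def_b lt_bw.
by rewrite -[X in rcons X _]def_b -take_nth // prefix_take.
Qed.

Definition border b w := prefix b w && suffix b w.

Definition longest_proper_border b w :=
  [/\ border b w, size b < size w
    & forall v, border v w -> size v < size w -> size v <= size b].

Lemma exists_longest_proper_border w :
  w != [::] -> exists b, longest_proper_border b w.
Proof.
move=> nz_w; pose P k := (k < size w) && border (drop (size w - k) w) w.
have P0 : P 0.
  by rewrite /P subn0 drop_size /border prefix0s suffix0s lt0n size_eq0 nz_w.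
have P_le k : P k -> k <= size w by case/andP=> /ltnW.
case: (ex_maxnP (ex_intro P 0 P0) P_le) => k /andP[lt_kw bw] max_k.
exists (drop (size w - k) w).
rewrite /longest_proper_border size_drop subKn ?(ltnW lt_kw); split=> //.
move=> v /[dup] /andP[_] + vw lt_vw; rewrite suffixE => /eqP def_v.
by apply: max_k; rewrite /P lt_vw def_v.
Qed.

Lemma left_special_rcons_suffix x y v w a :
  x <> y -> suffix (x :: v) w -> infix (y :: rcons v a) (rcons w a) ->
  left_special v w.
Proof.
move=> neq_xy xv_w; rewrite infix_rconsl -rcons_cons suffix_rcons eqxx /=.
case/orP=> [yv_w | yva_w].
  by case: neq_xy; case: (suffix_size_inj xv_w yv_w erefl).
have yv_w : infix (y :: v) w.
  by apply: (catr_infix (s := [:: a])); rewrite cats1.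
by exists x, y; split=> //; split=> //; exact: suffixW.
Qed.

Section ExtendByNextLetter.

Variables (w b : seq A) (a : A).
Hypothesis LSP_w : LSP w.
Hypothesis b_longest : longest_proper_border b w.
Hypothesis ba_w : prefix (rcons b a) w.

Lemma new_left_special_prefix x y u :
  x <> y -> infix (x :: u) (rcons w a) -> infix (y :: u) (rcons w a) ->
  ~~ infix (x :: u) w -> prefix u w.
Proof.
move=> neq_xy; rewrite infix_rconsl => /orP[+ + | -> //].
case/lastP: u => [|v a'] xu_wa yu_wa nxu_w; first exact: prefix0s.
move: xu_wa; rewrite -rcons_cons suffix_rcons => /andP[/eqP eq_a' xv_w].
rewrite {}eq_a' in yu_wa nxu_w *.
have v_w : prefix v w := LSP_w (left_special_rcons_suffix neq_xy xv_w yu_wa).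
have v_sw : suffix v w := suffix_trans (suffix_cons v x) xv_w.
case: b_longest => /andP[_ b_sw] _ /(_ v); rewrite /border v_w v_sw.
move=> /(_ isT (size_suffix xv_w)); rewrite leq_eqVlt.
case/orP=> [/eqP eq_vb | lt_vb].
  by rewrite (suffix_size_inj v_sw b_sw eq_vb).
have xv_b : suffix (x :: v) b by apply: suffix_le_size xv_w b_sw _.
suff : infix (rcons (x :: v) a) w by rewrite rcons_cons (negbTE nxu_w).
by apply: suffix_prefix_trans ba_w; rewrite suffix_rcons eqxx.
Qed.

Lemma LSP_rcons_longest_border : LSP (rcons w a).
Proof.
move=> u [x [y [neq_xy [xu yu]]]]; rewrite -cats1; apply: prefix_catl.
have [xu_w | nxu_w] := boolP (infix (x :: u) w); last first.
  exact: new_left_special_prefix neq_xy xu yu nxu_w.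
have [yu_w | nyu_w] := boolP (infix (y :: u) w); last first.
  by apply: new_left_special_prefix yu xu nyu_w => eq_yx; case: neq_xy.
by apply: LSP_w; exists x, y.
Qed.

End ExtendByNextLetter.

End Words.

Theorem lemma7 (A : eqType) (w : seq A) :
  w <> [::] -> LSP w -> exists2 a : A, a \in w & LSP (rcons w a).
Proof.
move=> /eqP nz_w LSP_w; have [b b_longest] := exists_longest_proper_border nz_w.
case: w nz_w LSP_w b_longest => [// | c w'] _ LSP_w b_longest.
have [/andP[b_w _] lt_b _] := b_longest.
exists (nth c (c :: w') (size b)); first exact: mem_nth.
exact/(LSP_rcons_longest_border LSP_w b_longest)/prefix_rcons_nth.
Qed.
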